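(* Let $\Gamma\subset\mathbb{R}^2$ be a simple closed curve such that every set of $6$ points of $\Gamma$ is in c.s.c. position. Let $a\in\Gamma$ be a smooth point of $\Gamma$ with tangent line $\ell$, and let $b,c,d\in\Gamma$ be points such that $abcd$ is a non-degenerate parallelogram (with vertices in this cyclic order, so $c$ is opposite to $a$) whose sides are not parallel to $\ell$. Then the line through $c$ parallel to $\ell$ is a supporting line of $\Gamma$.
   Context: A set of points in $\mathbb{R}^2$ is in c.s.c. position if it is contained in the boundary of a centrally symmetric convex body. Under the hypothesis, $\Gamma$ is the boundary of a convex body, so at every point it has two one-sided tangent lines (the best linear approximations of $\Gamma$ at that point in the clockwise and counter-clockwise directions); a point is smooth if these coincide, and the common line is the tangent line there (equivalently, there is a unique supporting line of $\Gamma$ through that point). A supporting line of $\Gamma$ is a line meeting $\Gamma$ such that $\Gamma$ lies in one of the closed half-planes it determines. *)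

From Stdlib Require Import Reals.
Open Scope R_scope.

Definition pt : Type := (R * R)%type.

Definition padd (p q : pt) : pt := (fst p + fst q, snd p + snd q).
Definition psub (p q : pt) : pt := (fst p - fst q, snd p - snd q).
Definition pscale (k : R) (p : pt) : pt := (k * fst p, k * snd p).
Definition dot (p q : pt) : R := fst p * fst q + snd p * snd q.
Definition cross (p q : pt) : R := fst p * snd q - snd p * fst q.
Definition dist2 (p q : pt) : R := (fst p - fst q)^2 + (snd p - snd q)^2.

Definition interior (K : pt -> Prop) (x : pt) : Prop :=
  exists r, 0 < r /\ forall y, dist2 x y < r^2 -> K y.
Definition closure (K : pt -> Prop) (x : pt) : Prop :=
  forall r, 0 < r -> exists y, K y /\ dist2 x y < r^2.
Definition boundary (K : pt -> Prop) (x : pt) : Prop :=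
  closure K x /\ ~ interior K x.
Definition is_closed (K : pt -> Prop) : Prop :=
  forall x, closure K x -> K x.
Definition is_bounded (K : pt -> Prop) : Prop :=
  exists M, forall x, K x -> dist2 x (0,0) <= M.
Definition is_convex (K : pt -> Prop) : Prop :=
  forall x y t, K x -> K y -> 0 <= t <= 1 ->
    K (padd (pscale (1 - t) x) (pscale t y)).

Definition convex_body (K : pt -> Prop) : Prop :=
  is_convex K /\ is_closed K /\ is_bounded K /\ exists x, interior K x.

Definition centrally_symmetric (K : pt -> Prop) : Prop :=
  exists o : pt, forall x, K x -> K (psub (pscale 2 o) x).

Definition csc_position (S : pt -> Prop) : Prop :=
  exists K, convex_body K /\ centrally_symmetric K /\
    forall x, S x -> boundary K x.

Definition has_six_elements (S : pt -> Prop) : Prop :=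
  exists p1 p2 p3 p4 p5 p6 : pt,
    p1 <> p2 /\ p1 <> p3 /\ p1 <> p4 /\ p1 <> p5 /\ p1 <> p6 /\
    p2 <> p3 /\ p2 <> p4 /\ p2 <> p5 /\ p2 <> p6 /\
    p3 <> p4 /\ p3 <> p5 /\ p3 <> p6 /\
    p4 <> p5 /\ p4 <> p6 /\ p5 <> p6 /\
    forall x, S x <-> (x = p1 \/ x = p2 \/ x = p3 \/ x = p4 \/ x = p5 \/ x = p6).

(* Gamma is the image of a continuous 1-periodic map R -> R^2 that is
   injective on [0,1) (i.e. a homeomorphic image of the circle). *)
Definition simple_closed_curve (G : pt -> Prop) : Prop :=
  exists g : R -> pt,
    continuity (fun t => fst (g t)) /\ continuity (fun t => snd (g t)) /\
    (forall t, g (t + 1) = g t) /\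
    (forall s t, 0 <= s < 1 -> 0 <= t < 1 -> g s = g t -> s = t) /\
    (forall x, G x <-> exists t, x = g t).

Definition is_line (L : pt -> Prop) : Prop :=
  exists n c, n <> (0, 0) /\ forall x, L x <-> dot n x = c.

Definition supporting_line (G L : pt -> Prop) : Prop :=
  exists n c, n <> (0, 0) /\ (forall x, L x <-> dot n x = c) /\
    (exists x, G x /\ L x) /\
    ((forall y, G y -> dot n y <= c) \/ (forall y, G y -> c <= dot n y)).

(* a is a smooth point of G with tangent line L: L is the unique
   supporting line of G through a *)
Definition tangent_line_at (G : pt -> Prop) (a : pt) (L : pt -> Prop) : Prop :=
  G a /\ supporting_line G L /\ L a /\
  forall L', supporting_line G L' -> L' a -> forall x, L' x <-> L x.

Definition smooth_point (G : pt -> Prop) (a : pt) : Prop :=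
  exists L, tangent_line_at G a L.

Definition lines_parallel (L1 L2 : pt -> Prop) : Prop :=
  is_line L1 /\ is_line L2 /\ exists v, forall x, L1 x <-> L2 (padd x v).

Definition dir_parallel (u : pt) (L : pt -> Prop) : Prop :=
  forall x, L x -> L (padd x u).

Definition nondeg_parallelogram (a b c d : pt) : Prop :=
  psub b a = psub c d /\ cross (psub b a) (psub d a) <> 0.

(* Take affine coordinates with a = (0,0), b = (1,0), c = (1,1), d = (0,1), the
   curve lying on the side of the tangent l containing b and d.  If a point y of
   the curve lay strictly beyond the parallel to l through c, it would lie beyond
   the line bc (or dc); smoothness at a then provides a point z of the curve
   beyond the line ab, on the far side of the line through a parallel to cy.
   The six points a, b, c, d, y, z lie on the boundary of a centrally symmetric
   convex body K with center o.  A point is interior to K as soon as it lies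
   strictly inside a segment of K whose line separates two further points of K.
   With this, the inscribed parallelogram forces o onto one of its midlines
   (else a vertex lies between the image of the opposite vertex and a point of
   K), y and z force o to be the center of the parallelogram, and then the image
   of y makes a an interior point of K. *)

From Pilot Require Import Defs.
From Stdlib Require Import Reals Lra Psatz Classical.
Open Scope R_scope.

Definition lerp (x y : pt) (l : R) : pt := padd (pscale (1 - l) x) (pscale l y).
Definition reflect (o x : pt) : pt := psub (pscale 2 o) x.

Ltac pt_eq :=
  repeat match goal with p : pt |- _ => destruct p | p : (R * R)%type |- _ => destruct p end;
  unfold lerp, reflect, padd, psub, pscale, cross, dot, dist2 in *; simpl in *;
  try match goal with |- (_, _) = (_, _) => f_equal end.

Ltac coord_eq :=
  unfold lerp, reflect, padd, psub, pscale, cross; simpl;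
  try match goal with |- (_, _) = (_, _) => f_equal end.

Lemma cross_sq_le e h : cross e h * cross e h <= dot e e * dot h h.
Proof.
  destruct e as [e1 e2], h as [h1 h2]; unfold cross, dot; simpl.
  pose proof (Rle_0_sqr (e1 * h1 + e2 * h2)); unfold Rsqr in *; nra.
Qed.

Lemma decompose_cross e f h : cross e f <> 0 ->
  h = padd (pscale (cross h f / cross e f) e) (pscale (cross e h / cross e f) f).
Proof. intro Hc. pt_eq; field; assumption. Qed.

Lemma cross_sq_lt e h M m : dot e e <= M -> dot h h * M < m -> cross e h * cross e h < m.
Proof.
  intros He Hh. pose proof (cross_sq_le e h).
  assert (0 <= dot h h) by (unfold dot; nra). nra.
Qed.

Lemma convex_near_segment (K : pt -> Prop) (p e f : pt) (dl A mu : R) :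
  is_convex K -> 0 < dl -> (forall B, -dl <= B <= dl -> K (padd p (pscale B e))) ->
  K (padd p f) -> 0 <= mu < 1 / 2 -> A * A < dl * dl / 4 ->
  K (padd p (padd (pscale A e) (pscale mu f))).
Proof.
  intros Kc Hdl Hseg Hf Hmu HA.
  replace (padd p (padd (pscale A e) (pscale mu f)))
    with (lerp (padd p (pscale (A / (1 - mu)) e)) (padd p f) mu) by (pt_eq; field; lra).
  apply Kc; [apply Hseg | assumption | lra].
  assert (1 / 4 < (1 - mu) * (1 - mu)) by nra.
  assert (E : A / (1 - mu) * (1 - mu) = A) by (field; lra).
  assert (A / (1 - mu) * (A / (1 - mu)) < dl * dl) by (rewrite <- E in HA; nra).
  split; nra.
Qed.

(* Points near p on the side of f are A e + mu f with mu >= 0 small and A small. *)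
Lemma convex_half_disc (K : pt -> Prop) (p e f : pt) (dl : R) :
  is_convex K -> 0 < dl -> cross e f <> 0 ->
  (forall A, -dl <= A <= dl -> K (padd p (pscale A e))) -> K (padd p f) ->
  exists r, 0 < r /\ forall y, dist2 p y < r ^ 2 ->
    0 <= cross e f * cross e (psub y p) -> K y.
Proof.
  intros Kc Hdl Hc Hseg Hf.
  set (c := cross e f) in *.
  pose proof (Rsqr_pos_lt c Hc) as Hc2; unfold Rsqr in Hc2.
  set (M := dot e e + dot f f + 1).
  assert (HM : 0 < M) by (unfold M, dot; nra).
  set (m := c * c * Rmin (1 / 4) (dl * dl / 4)).
  pose proof (Rmin_l (1 / 4) (dl * dl / 4)); pose proof (Rmin_r (1 / 4) (dl * dl / 4)).
  assert (Hm : 0 < m / M).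
  { apply Rdiv_lt_0_compat; [| assumption].
    apply Rmult_lt_0_compat; [assumption | apply Rmin_pos; nra]. }
  exists (sqrt (m / M)); split; [apply sqrt_lt_R0, Hm |].
  intros y Hy Hside.
  rewrite pow2_sqrt in Hy by lra.
  set (h := psub y p) in *.
  assert (Hh : dot h h * M < m).
  { replace (dot h h) with (dist2 p y) by (unfold h; pt_eq; ring).
    apply (Rmult_lt_compat_r M) in Hy; [| assumption].
    replace (m / M * M) with m in Hy by (field; lra). assumption. }
  set (mu := cross e h / c); set (A := cross h f / c).
  assert (Hmu : mu * mu * (c * c) < c * c / 4).
  { replace (mu * mu * (c * c)) with (cross e h * cross e h) by (unfold mu; field; assumption).
    apply (cross_sq_lt e h M); [unfold M, dot; nra |]. unfold m in Hh; nra. }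
  assert (HA : A * A * (c * c) < dl * dl / 4 * (c * c)).
  { replace (A * A * (c * c)) with (cross f h * cross f h) by (unfold A, cross; field; assumption).
    apply (cross_sq_lt f h M); [unfold M, dot; nra |]. unfold m in Hh; nra. }
  assert (Hmu0 : 0 <= mu * (c * c)) by (replace (mu * (c * c)) with (c * cross e h)
    by (unfold mu; field; assumption); assumption).
  replace y with (padd p h) by (unfold h; pt_eq; ring).
  rewrite (decompose_cross e f h Hc); fold c A mu.
  apply (convex_near_segment K p e f dl); try assumption; [split |]; nra.
Qed.

Lemma interior_of_straddled_segment (K : pt -> Prop) (x1 x2 x3 x4 : pt) (lam : R) :
  is_convex K -> K x1 -> K x2 -> K x3 -> K x4 -> 0 < lam < 1 ->
  cross (psub x2 x1) (psub x3 x1) * cross (psub x2 x1) (psub x4 x1) < 0 ->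
  Defs.interior K (lerp x1 x2 lam).
Proof.
  intros Kc K1 K2 K3 K4 Hlam Hstr.
  set (p := lerp x1 x2 lam). set (e := psub x2 x1) in *.
  assert (Hcross : forall x, cross e (psub x p) = cross e (psub x x1))
    by (intro; unfold e, p; pt_eq; ring).
  assert (Hseg : forall A, - Rmin lam (1 - lam) <= A <= Rmin lam (1 - lam) ->
                  K (padd p (pscale A e))).
  { intros A HA. pose proof (Rmin_l lam (1 - lam)); pose proof (Rmin_r lam (1 - lam)).
    replace (padd p (pscale A e)) with (lerp x1 x2 (lam + A)) by (unfold p, e; pt_eq; ring).
    apply Kc; auto; lra. }
  assert (Hdl : 0 < Rmin lam (1 - lam)) by (apply Rmin_pos; lra).
  assert (Kf : K (padd p (psub x3 p))) by (replace (padd p (psub x3 p)) with x3 by (pt_eq; ring); exact K3).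
  assert (Kg : K (padd p (psub x4 p))) by (replace (padd p (psub x4 p)) with x4 by (pt_eq; ring); exact K4).
  rewrite <- !Hcross in Hstr.
  assert (Hf : cross e (psub x3 p) <> 0) by (intro E; rewrite E in Hstr; lra).
  assert (Hg : cross e (psub x4 p) <> 0) by (intro E; rewrite E in Hstr; lra).
  destruct (convex_half_disc K p e _ _ Kc Hdl Hf Hseg Kf) as [r1 [Hr1 B1]].
  destruct (convex_half_disc K p e _ _ Kc Hdl Hg Hseg Kg) as [r2 [Hr2 B2]].
  exists (Rmin r1 r2); split; [apply Rmin_pos; assumption |].
  intros y Hy.
  pose proof (Rmin_l r1 r2); pose proof (Rmin_r r1 r2); pose proof (Rmin_pos r1 r2 Hr1 Hr2).
  destruct (Rle_or_lt 0 (cross e (psub x3 p) * cross e (psub y p))) as [Hs | Hs].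
  - apply B1; [nra | assumption].
  - apply B2; [nra |].
    assert (0 < (cross e (psub x3 p) * cross e (psub x3 p)) * (cross e (psub x4 p) * cross e (psub y p)))
      by nra.
    pose proof (Rsqr_pos_lt _ Hf) as Hf2; unfold Rsqr in Hf2. nra.
Qed.

Lemma ratio_in_unit x y : 0 < x * y -> 0 < x / (x + y) < 1.
Proof.
  intro H.
  assert (Hs : x + y <> 0) by (intro; nra).
  assert (Hy : x / (x + y) = 1 - y / (x + y)) by (field; exact Hs).
  destruct (Rlt_or_le 0 x).
  - assert (0 < y) by nra.
    pose proof (Rdiv_lt_0_compat x (x + y)); pose proof (Rdiv_lt_0_compat y (x + y)); lra.
  - assert (x < 0 /\ y < 0) by nra.
    pose proof (Rdiv_lt_0_compat (- x) (- x + - y)); pose proof (Rdiv_lt_0_compat (- y) (- x + - y)).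
    assert (- x / (- x + - y) = x / (x + y)) by (field; lra).
    assert (- y / (- x + - y) = y / (x + y)) by (field; lra). lra.
Qed.

Lemma inv_in_unit x : 1 < x -> 0 < 1 / x < 1.
Proof.
  intro Hx. replace (1 / x) with (1 / (1 + (x - 1))) by (f_equal; ring).
  apply ratio_in_unit; lra.
Qed.

Definition frame (a b d : pt) (p : pt) : pt :=
  padd a (padd (pscale (fst p) (psub b a)) (pscale (snd p) (psub d a))).

Lemma frame_lerp a b d p q l :
  frame a b d (lerp p q l) = lerp (frame a b d p) (frame a b d q) l.
Proof. unfold frame; pt_eq; ring. Qed.

Lemma frame_reflect a b d w p :
  frame a b d (reflect w p) = reflect (frame a b d w) (frame a b d p).
Proof. unfold frame; pt_eq; ring. Qed.

Lemma cross_frame a b d p q r :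
  cross (psub (frame a b d q) (frame a b d p)) (psub (frame a b d r) (frame a b d p)) =
  cross (psub b a) (psub d a) * cross (psub q p) (psub r p).
Proof. unfold frame; pt_eq; ring. Qed.

Lemma frame_surj a b d x : cross (psub b a) (psub d a) <> 0 -> exists p, x = frame a b d p.
Proof.
  intro HD.
  exists (cross (psub x a) (psub d a) / cross (psub b a) (psub d a),
          cross (psub b a) (psub x a) / cross (psub b a) (psub d a)).
  unfold frame; pt_eq; field; assumption.
Qed.

Lemma frame_inj a b d p q :
  cross (psub b a) (psub d a) <> 0 -> frame a b d p = frame a b d q -> p = q.
Proof.
  intros HD E.
  assert (C : forall r, cross (psub (frame a b d r) a) (psub d a) = cross (psub b a) (psub d a) * fst r
            /\ cross (psub b a) (psub (frame a b d r) a) = cross (psub b a) (psub d a) * snd r)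
    by (intro; unfold frame; split; pt_eq; ring).
  destruct (C p) as [Cp1 Cp2], (C q) as [Cq1 Cq2]. rewrite E in Cp1, Cp2.
  destruct p as [p1 p2], q as [q1 q2]; simpl in *.
  f_equal; eapply Rmult_eq_reg_l; eauto; congruence.
Qed.

Lemma dot_psub n x y : dot n (psub x y) = dot n x - dot n y.
Proof. pt_eq; ring. Qed.

Lemma dot_frame n a b d s t :
  dot n (frame a b d (s, t)) = dot n a + s * dot n (psub b a) + t * dot n (psub d a).
Proof. unfold frame; pt_eq; ring. Qed.

Lemma frame_00 a b d : frame a b d (0, 0) = a.
Proof. unfold frame; pt_eq; ring. Qed.

Lemma frame_10 a b d : frame a b d (1, 0) = b.
Proof. unfold frame; pt_eq; ring. Qed.

Lemma frame_01 a b d : frame a b d (0, 1) = d.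
Proof. unfold frame; pt_eq; ring. Qed.

Lemma frame_11 a b c d : psub b a = psub c d -> frame a b d (1, 1) = c.
Proof. intro H; unfold frame; pt_eq; injection H as H1 H2; lra. Qed.

Lemma frame_flip a b c d s t :
  psub b a = psub c d -> frame d c a (s, t) = frame a b d (s, 1 - t).
Proof. intro H; unfold frame; pt_eq; injection H as H1 H2; nra. Qed.

Lemma frame_rotate a b c d s t :
  psub b a = psub c d -> frame d a c (s, t) = frame a b d (t, 1 - s).
Proof. intro H; unfold frame; pt_eq; injection H as H1 H2; nra. Qed.

Lemma frame_swap a b d s t : frame a d b (s, t) = frame a b d (t, s).
Proof. unfold frame; pt_eq; ring. Qed.

Ltac parallelogram_relabel :=
  unfold nondeg_parallelogram; intros [H HD]; pt_eq; injection H as H1 H2;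
  split; [f_equal; lra | intro E; apply HD; nra].

Lemma parallelogram_flip a b c d :
  nondeg_parallelogram a b c d -> nondeg_parallelogram d c b a.
Proof. parallelogram_relabel. Qed.

Lemma parallelogram_rotate a b c d :
  nondeg_parallelogram a b c d -> nondeg_parallelogram d a b c.
Proof. parallelogram_relabel. Qed.

Lemma parallelogram_swap a b c d :
  nondeg_parallelogram a b c d -> nondeg_parallelogram a d c b.
Proof. parallelogram_relabel. Qed.

Lemma cross_lerp_base x1 x2 lam x :
  cross (psub x2 x1) (psub x (lerp x1 x2 lam)) = cross (psub x2 x1) (psub x x1).
Proof. pt_eq; ring. Qed.

Lemma cross_scale_l k e x : cross (pscale k e) x = k * cross e x.
Proof. pt_eq; ring. Qed.

Section InscribedParallelogram.

Variables (K : pt -> Prop) (o : pt).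
Hypothesis K_convex : is_convex K.
Hypothesis K_closed : is_closed K.
Hypothesis K_sym : forall x, K x -> K (reflect o x).

Lemma boundary_mem x : boundary K x -> K x.
Proof. intros [Hx _]; exact (K_closed x Hx). Qed.

(* The straddling condition is tested against the target point q, which lies
   on the segment, so that it involves no division. *)
Lemma interior_frame a b d x1 x2 x3 x4 e kap lam q :
  cross (psub b a) (psub d a) <> 0 ->
  K (frame a b d x1) -> K (frame a b d x2) -> K (frame a b d x3) -> K (frame a b d x4) ->
  0 < lam < 1 -> lerp x1 x2 lam = q -> psub x2 x1 = pscale kap e -> kap <> 0 ->
  cross e (psub x3 q) * cross e (psub x4 q) < 0 ->
  Defs.interior K (frame a b d q).
Proof.
  intros HD K1 K2 K3 K4 Hlam Eq Ee Hkap Hstr.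
  rewrite <- Eq, frame_lerp.
  apply (interior_of_straddled_segment K _ _ (frame a b d x3) (frame a b d x4)); auto.
  rewrite !cross_frame, <- !(cross_lerp_base x1 x2 lam), Eq, Ee, !cross_scale_l.
  set (D := cross (psub b a) (psub d a)) in *.
  assert (0 < D * D * (kap * kap))
    by (apply Rmult_lt_0_compat; apply Rsqr_pos_lt; assumption).
  replace (D * (kap * cross e (psub x3 q)) * (D * (kap * cross e (psub x4 q))))
    with (D * D * (kap * kap) * (cross e (psub x3 q) * cross e (psub x4 q))) by ring.
  nra.
Qed.

Lemma frame_lerp_mem a b d p q l :
  K (frame a b d p) -> K (frame a b d q) -> 0 <= l <= 1 -> K (frame a b d (lerp p q l)).
Proof. rewrite frame_lerp; intros; apply K_convex; assumption. Qed.

Lemma frame_reflect_mem a b d w p :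
  o = frame a b d w -> K (frame a b d p) -> K (frame a b d (reflect w p)).
Proof. intros Ho Kp; rewrite frame_reflect, <- Ho; apply K_sym, Kp. Qed.

Lemma corner_interior a b c d s t :
  nondeg_parallelogram a b c d -> K a -> K b -> K d ->
  o = frame a b d (s, t) -> 1 / 2 < s -> 1 / 2 < t -> Defs.interior K c.
Proof.
  intros [Hpar HD] Ka Kb Kd Ho Hs Ht.
  (* c lies between the image of a and a point of the diagonal bd, and that
     line separates b from d *)
  rewrite <- (frame_11 a b c d Hpar).
  rewrite <- (frame_00 a b d) in Ka; rewrite <- (frame_10 a b d) in Kb;
    rewrite <- (frame_01 a b d) in Kd.
  set (ws := 2 * s - 1); set (wt := 2 * t - 1).
  assert (Hws : 0 < ws) by (unfold ws; lra); assert (Hwt : 0 < wt) by (unfold wt; lra).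
  apply (interior_frame a b d (lerp (1, 0) (0, 1) (ws / (ws + wt))) (reflect (s, t) (0, 0))
           (1, 0) (0, 1) (ws, wt) (1 + 1 / (ws + wt)) (1 / (1 + (ws + wt)))); try assumption.
  - apply frame_lerp_mem; auto. pose proof (ratio_in_unit ws wt ltac:(nra)); lra.
  - apply (frame_reflect_mem a b d); auto.
  - apply inv_in_unit; lra.
  - coord_eq; unfold ws, wt; field; lra.
  - coord_eq; unfold ws, wt; field; lra.
  - assert (0 < 1 / (ws + wt)) by (apply Rdiv_lt_0_compat; lra). lra.
  - coord_eq; nra.
Qed.

Lemma center_on_midline a b c d s t :
  nondeg_parallelogram a b c d ->
  boundary K a -> boundary K b -> boundary K c -> boundary K d ->
  o = frame a b d (s, t) -> s = 1 / 2 \/ t = 1 / 2.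
Proof.
  intros Hp Ba Bb Bc Bd Ho.
  pose proof (parallelogram_rotate _ _ _ _ Hp) as Hp1.
  pose proof (parallelogram_rotate _ _ _ _ Hp1) as Hp2.
  pose proof (parallelogram_rotate _ _ _ _ Hp2) as Hp3.
  assert (Ho1 : o = frame d a c (1 - t, s))
    by (rewrite Ho, (frame_rotate a b c d) by apply Hp; do 2 f_equal; ring).
  assert (Ho2 : o = frame c d b (1 - s, 1 - t))
    by (rewrite Ho1, (frame_rotate d a b c) by apply Hp1; do 2 f_equal; ring).
  assert (Ho3 : o = frame b c a (t, 1 - s))
    by (rewrite Ho2, (frame_rotate c d a b) by apply Hp2; do 2 f_equal; ring).
  pose proof (boundary_mem a Ba) as Ka; pose proof (boundary_mem b Bb) as Kb;
    pose proof (boundary_mem c Bc) as Kc; pose proof (boundary_mem d Bd) as Kd.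
  destruct (Rtotal_order s (1 / 2)) as [Hs | [Hs | Hs]]; auto;
    destruct (Rtotal_order t (1 / 2)) as [Ht | [Ht | Ht]]; auto; exfalso.
  - apply (proj2 Ba), (corner_interior c d a b (1 - s) (1 - t)); auto; lra.
  - apply (proj2 Bd), (corner_interior b c d a t (1 - s)); auto; lra.
  - apply (proj2 Bb), (corner_interior d a b c (1 - t) s); auto; lra.
  - apply (proj2 Bc), (corner_interior a b c d s t); auto.
Qed.

Lemma midline_interior a b c d y t sy ty :
  nondeg_parallelogram a b c d -> K a -> K b -> K y ->
  y = frame a b d (sy, ty) -> 1 < sy ->
  o = frame a b d (1 / 2, t) -> 1 / 2 < t -> Defs.interior K d.
Proof.
  intros [Hpar HD] Ka Kb Ky Ey Hsy Ho Ht.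
  rewrite <- (frame_01 a b d).
  rewrite <- (frame_00 a b d) in Ka; rewrite <- (frame_10 a b d) in Kb; rewrite Ey in Ky.
  (* d lies between a and the image of b, and b and the image of y lie on either side of ad *)
  apply (interior_frame a b d (0, 0) (reflect (1 / 2, t) (1, 0)) (1, 0)
           (reflect (1 / 2, t) (sy, ty)) (0, 1) (2 * t) (1 / (2 * t))); try assumption.
  - apply (frame_reflect_mem a b d); assumption.
  - apply (frame_reflect_mem a b d); assumption.
  - apply inv_in_unit; lra.
  - coord_eq; field; lra.
  - coord_eq; field.
  - lra.
  - coord_eq; lra.
Qed.

Lemma center_s_half a b c d y t sy ty :
  nondeg_parallelogram a b c d ->
  boundary K a -> boundary K b -> boundary K c -> boundary K d -> K y ->
  y = frame a b d (sy, ty) -> 1 < sy -> o = frame a b d (1 / 2, t) -> t = 1 / 2.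
Proof.
  intros Hp Ba Bb Bc Bd Ky Ey Hsy Ho.
  pose proof (parallelogram_flip _ _ _ _ Hp) as Hp'.
  destruct (Rtotal_order t (1 / 2)) as [Ht | [Ht | Ht]]; auto; exfalso.
  - apply (proj2 Ba), (midline_interior d c b a y (1 - t) sy (1 - ty)); auto.
    + apply boundary_mem, Bd.
    + apply boundary_mem, Bc.
    + rewrite Ey, (frame_flip a b c d) by apply Hp; do 2 f_equal; ring.
    + rewrite Ho, (frame_flip a b c d) by apply Hp; do 2 f_equal; ring.
    + lra.
  - apply (proj2 Bd), (midline_interior a b c d y t sy ty); auto; apply boundary_mem; assumption.
Qed.

Lemma center_t_half a b c d z s sz tz :
  nondeg_parallelogram a b c d ->
  boundary K a -> boundary K b -> boundary K c -> boundary K d -> K z ->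
  z = frame a b d (sz, tz) -> tz < 0 -> o = frame a b d (s, 1 / 2) -> s = 1 / 2.
Proof.
  intros Hp Ba Bb Bc Bd Kz Ez Htz Ho.
  apply (center_s_half d a b c z s (1 - tz) sz); auto.
  - apply parallelogram_rotate, Hp.
  - rewrite Ez, (frame_rotate a b c d) by apply Hp; do 2 f_equal; ring.
  - lra.
  - rewrite Ho, (frame_rotate a b c d) by apply Hp; do 2 f_equal; field.
Qed.

Lemma centered_interior_far a b d y sy ty :
  cross (psub b a) (psub d a) <> 0 -> K b -> K d -> K y ->
  y = frame a b d (sy, ty) -> 1 < sy -> 1 < ty ->
  o = frame a b d (1 / 2, 1 / 2) -> Defs.interior K a.
Proof.
  intros HD Kb Kd Ky Ey Hsy Hty Ho.
  rewrite <- (frame_00 a b d).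
  rewrite <- (frame_10 a b d) in Kb; rewrite <- (frame_01 a b d) in Kd; rewrite Ey in Ky.
  set (p := 1 - sy); set (q := 1 - ty).
  assert (Hp : p < 0) by (unfold p; lra); assert (Hq : q < 0) by (unfold q; lra).
  (* the ray from the image (p, q) of y through a meets the diagonal bd *)
  apply (interior_frame a b d (reflect (1 / 2, 1 / 2) (sy, ty))
           (lerp (1, 0) (0, 1) (q / (q + p))) (1, 0) (0, 1) (p, q)
           (1 / (p + q) - 1) ((p + q) / ((p + q) + -1))); try assumption.
  - apply (frame_reflect_mem a b d); assumption.
  - apply frame_lerp_mem; try assumption. pose proof (ratio_in_unit q p ltac:(nra)); lra.
  - apply ratio_in_unit; lra.
  - coord_eq; unfold p, q; field; lra.
  - coord_eq; unfold p, q; field; lra.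
  - assert (1 / (p + q) < 0) by (apply Rdiv_pos_neg; lra). lra.
  - coord_eq; nra.
Qed.

Lemma centered_interior_near a b d y z sy ty sz tz :
  cross (psub b a) (psub d a) <> 0 -> K d -> K y -> K z ->
  y = frame a b d (sy, ty) -> z = frame a b d (sz, tz) ->
  1 < sy -> ty <= 1 -> 0 < sz -> 0 < (1 - sy) * tz - (1 - ty) * sz ->
  o = frame a b d (1 / 2, 1 / 2) -> Defs.interior K a.
Proof.
  intros HD Kd Ky Kz Ey Ez Hsy Hty Hsz Hh Ho.
  rewrite <- (frame_00 a b d).
  rewrite <- (frame_01 a b d) in Kd; rewrite Ey in Ky; rewrite Ez in Kz.
  set (p := 1 - sy) in *; set (q := 1 - ty) in *.
  set (h := p * tz - q * sz) in *.
  assert (Hp : p < 0) by (unfold p; lra); assert (Hq : 0 <= q) by (unfold q; lra).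
  (* r, on the segment dz, lies on the line through a and the image (p, q) of y *)
  set (l := p / (p + - h)).
  assert (Hl : 0 < l < 1) by (apply ratio_in_unit; nra).
  assert (El : l * (p - h) = p) by (unfold l; field; lra).
  clearbody l.
  set (r := lerp (0, 1) (sz, tz) l).
  assert (Er : r = (l * sz, 1 - l + l * tz)) by (unfold r; coord_eq; ring).
  assert (Hr : p * (1 - l + l * tz) = q * (l * sz)) by (unfold h in El; nra).
  assert (Hrs : 0 < l * sz) by nra.
  set (lam := p / (p + - (l * sz))).
  assert (Hlam : 0 < lam < 1) by (apply ratio_in_unit; nra).
  assert (Elam : lam * (p - l * sz) = p) by (unfold lam; field; lra).
  assert (Ey' : reflect (1 / 2, 1 / 2) (sy, ty) = (p, q)) by (coord_eq; unfold p, q; field).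
  clearbody lam.
  apply (interior_frame a b d (reflect (1 / 2, 1 / 2) (sy, ty)) r (sz, tz) (0, 1) (p, q)
           (l * sz / p - 1) lam); try assumption.
  - apply (frame_reflect_mem a b d); assumption.
  - apply frame_lerp_mem; try assumption; lra.
  - rewrite Ey', Er; coord_eq; [nra |].
    apply (Rmult_eq_reg_l p); [nra | lra].
  - rewrite Ey', Er; coord_eq; [field; lra |].
    apply (Rmult_eq_reg_l p); [field_simplify; nra | lra].
  - assert (l * sz / p < 0) by (apply Rdiv_pos_neg; lra). lra.
  - coord_eq; unfold h in Hh; nra.
Qed.

Lemma inscribed_parallelogram_impossible a b c d y z sy ty sz tz :
  nondeg_parallelogram a b c d ->
  boundary K a -> boundary K b -> boundary K c -> boundary K d ->
  boundary K y -> boundary K z ->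
  y = frame a b d (sy, ty) -> z = frame a b d (sz, tz) ->
  1 < sy -> tz < 0 -> 0 < sz -> (ty <= 1 -> 0 < (1 - sy) * tz - (1 - ty) * sz) -> False.
Proof.
  intros Hp Ba Bb Bc Bd By Bz Ey Ez Hsy Htz Hsz Hh.
  pose proof (proj2 Hp) as HD.
  pose proof (boundary_mem y By) as Ky; pose proof (boundary_mem z Bz) as Kz.
  destruct (frame_surj a b d o HD) as [[s t] Ho].
  assert (Hc : s = 1 / 2 /\ t = 1 / 2).
  { destruct (center_on_midline a b c d s t) as [Hs | Ht]; auto; [subst s | subst t]; split; auto.
    - apply (center_s_half a b c d y t sy ty); auto.
    - apply (center_t_half a b c d z s sz tz); auto. }
  destruct Hc as [-> ->].
  apply (proj2 Ba). destruct (Rlt_or_le 1 ty) as [Hty | Hty].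
  - apply (centered_interior_far a b d y sy ty); auto using boundary_mem.
  - apply (centered_interior_near a b d y z sy ty sz tz); auto using boundary_mem.
Qed.

End InscribedParallelogram.

Definition csc_six_points (G : pt -> Prop) : Prop :=
  forall S : pt -> Prop, (forall x, S x -> G x) -> has_six_elements S -> csc_position S.

(* Otherwise the line through a in direction e would be a second supporting
   line at a. *)
Lemma curve_crosses_secant (G l : pt -> Prop) a n k e :
  tangent_line_at G a l -> (forall x, l x <-> dot n x = k) -> dot n e <> 0 ->
  (exists z, G z /\ 0 < cross e (psub z a)) /\ (exists z, G z /\ cross e (psub z a) < 0).
Proof.
  intros [Ga [_ [la Huniq]]] Hl He.
  set (m := (- snd e, fst e)).
  assert (Hm : forall x, dot m x - dot m a = cross e (psub x a)) by (intro; unfold m; pt_eq; ring).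
  assert (Hm0 : m <> (0, 0)).
  { intro E; apply He. unfold m in E; injection E as E1 E2. unfold dot; rewrite E2.
    replace (snd e) with 0 by lra; ring. }
  assert (Hns : ~ supporting_line G (fun x => dot m x = dot m a)).
  { intro Hs. apply He.
    assert (Hae : dot m (padd a e) = dot m a) by (unfold m; pt_eq; ring).
    apply (Huniq _ Hs eq_refl), Hl in Hae. apply Hl in la.
    revert Hae la; pt_eq; lra. }
  split; apply NNPP; intro Hno; apply Hns; exists m, (dot m a);
    repeat split; auto; try (exists a; split; auto); [left | right];
    intros x Gx; apply Rnot_lt_le; intro Hx; apply Hno; exists x;
    (split; [exact Gx | rewrite <- Hm; lra]).
Qed.

Lemma curve_crosses_frame_secant (G l : pt -> Prop) a b d n k q :
  tangent_line_at G a l -> (forall x, l x <-> dot n x = k) ->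
  cross (psub b a) (psub d a) <> 0 -> dot n (psub (frame a b d q) a) <> 0 ->
  exists s t, G (frame a b d (s, t)) /\ 0 < cross q (s, t).
Proof.
  intros Ht Hl HD Hq.
  set (D := cross (psub b a) (psub d a)) in *.
  assert (C : forall p, cross (psub (frame a b d q) a) (psub (frame a b d p) a) = D * cross q p).
  { intro p. rewrite <- (frame_00 a b d) at 2 4. rewrite cross_frame.
    unfold D; f_equal; coord_eq; ring. }
  destruct (curve_crosses_secant G l a n k _ Ht Hl Hq) as [[z1 [G1 C1]] [z2 [G2 C2]]].
  destruct (frame_surj a b d z1 HD) as [[s1 t1] ->];
    destruct (frame_surj a b d z2 HD) as [[s2 t2] ->].
  rewrite C in C1, C2.
  destruct (Rtotal_order D 0) as [HD' | [HD' | HD']]; [| contradiction |].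
  - exists s2, t2; split; [assumption | nra].
  - exists s1, t1; split; [assumption | nra].
Qed.

Lemma frame_neq a b d p q :
  cross (psub b a) (psub d a) <> 0 -> fst p <> fst q \/ snd p <> snd q ->
  frame a b d p <> frame a b d q.
Proof. intros HD Hpq E; apply frame_inj in E; [subst; tauto | exact HD]. Qed.

Lemma six_frame_points a b d sy ty sz tz :
  cross (psub b a) (psub d a) <> 0 -> 1 < sy -> tz < 0 ->
  (ty <= 1 -> 0 < (1 - sy) * tz - (1 - ty) * sz) ->
  has_six_elements (fun x => x = frame a b d (0, 0) \/ x = frame a b d (1, 0) \/
    x = frame a b d (1, 1) \/ x = frame a b d (0, 1) \/
    x = frame a b d (sy, ty) \/ x = frame a b d (sz, tz)).
Proof.
  intros HD Hsy Htz Hh.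
  assert (Hyz : sy <> sz \/ ty <> tz).
  { destruct (Req_dec sy sz) as [<- | Hs]; [right; intros <- | left; exact Hs].
    destruct (Rle_or_lt ty 1) as [Hty | Hty]; [specialize (Hh Hty); nra | lra]. }
  exists (frame a b d (0, 0)), (frame a b d (1, 0)), (frame a b d (1, 1)), (frame a b d (0, 1)),
    (frame a b d (sy, ty)), (frame a b d (sz, tz)).
  repeat split; try (apply frame_neq; [exact HD | simpl; first [left; lra | right; lra]]).
  - apply frame_neq; assumption.
  - intro Hx; exact Hx.
  - intro Hx; exact Hx.
Qed.

Lemma no_curve_point_beyond_side (G l : pt -> Prop) a b c d n k y sy ty :
  csc_six_points G -> tangent_line_at G a l -> (forall x, l x <-> dot n x = k) ->
  (forall x, G x -> dot n x <= k) -> nondeg_parallelogram a b c d ->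
  G b -> G c -> G d -> G y -> y = frame a b d (sy, ty) ->
  dot n (psub b a) < 0 -> dot n (psub d a) < 0 -> dot n y < dot n c -> 1 < sy -> False.
Proof.
  intros H6 Ht Hl Hle Hp Gb Gc Gd Gy Ey Hal Hbe Hyc Hsy.
  pose proof Ht as [Ga [_ [la _]]]; apply Hl in la.
  pose proof (proj2 Hp) as HD.
  set (al := dot n (psub b a)) in *; set (be := dot n (psub d a)) in *.
  assert (Gside : forall s t, G (frame a b d (s, t)) -> al * s + be * t <= 0).
  { intros s t Gst; pose proof (Hle _ Gst) as X; rewrite dot_frame in X; fold al be in X; lra. }
  assert (Hy : 0 < al * (1 - sy) + be * (1 - ty)).
  { rewrite <- (frame_11 a b c d (proj1 Hp)), Ey, !dot_frame in Hyc; fold al be in Hyc; lra. }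
  assert (Hz : exists sz tz, G (frame a b d (sz, tz)) /\ tz < 0 /\
                 (ty <= 1 -> 0 < (1 - sy) * tz - (1 - ty) * sz)).
  { destruct (Rlt_or_le 1 ty) as [Hty | Hty].
    - destruct (curve_crosses_frame_secant G l a b d n k (-1, 0)) as [sz [tz [Gz Hz]]]; auto.
      + rewrite dot_psub, dot_frame; fold al be; intro; nra.
      + unfold cross in Hz; simpl in Hz.
        exists sz, tz; split; [| split]; [assumption | lra | intro; lra].
    - destruct (curve_crosses_frame_secant G l a b d n k (1 - sy, 1 - ty)) as [sz [tz [Gz Hz]]];
        auto.
      + rewrite dot_psub, dot_frame; fold al be; intro; nra.
      + unfold cross in Hz; simpl in Hz.
        pose proof (Gside _ _ Gz).
        exists sz, tz; split; [| split]; [assumption | nra | intro; lra]. }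
  destruct Hz as [sz [tz [Gz [Htz Hh]]]].
  assert (Hsz : 0 < sz) by (pose proof (Gside _ _ Gz); nra).
  pose proof (six_frame_points a b d sy ty sz tz HD Hsy Htz Hh) as Hsix.
  apply H6 in Hsix as [K [[Kc [Kcl _]] [[o Ho] HB]]].
  2:{ intros x [-> | [-> | [-> | [-> | [-> | ->]]]]]; auto;
      rewrite ?frame_00, ?frame_10, ?(frame_11 a b c d (proj1 Hp)), ?frame_01, <- ?Ey; auto. }
  apply (inscribed_parallelogram_impossible K o Kc Kcl Ho a b c d y (frame a b d (sz, tz))
           sy ty sz tz); auto; apply HB;
    rewrite ?frame_00, ?frame_10, ?(frame_11 a b c d (proj1 Hp)), ?frame_01, <- ?Ey; tauto.
Qed.

Lemma tangent_nonparallel_side (G l : pt -> Prop) a x n k :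
  (forall y, l y <-> dot n y = k) -> l a -> (forall y, G y -> dot n y <= k) ->
  G x -> ~ dir_parallel (psub x a) l -> dot n (psub x a) < 0.
Proof.
  intros Hl la Hle Gx Hnp. apply Hl in la. pose proof (Hle x Gx) as Hx.
  rewrite dot_psub. destruct (Rle_lt_or_eq_dec _ _ Hx) as [Hlt | Heq]; [lra |].
  exfalso; apply Hnp; intros y Hy; apply Hl in Hy; apply Hl.
  replace (dot n (padd y (psub x a))) with (dot n y + (dot n x - dot n a)) by (pt_eq; ring).
  lra.
Qed.

Lemma opposite_vertex_extremal (G l : pt -> Prop) a b c d n k :
  csc_six_points G -> tangent_line_at G a l -> (forall x, l x <-> dot n x = k) ->
  (forall x, G x -> dot n x <= k) -> nondeg_parallelogram a b c d -> G b -> G c -> G d ->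
  ~ dir_parallel (psub b a) l -> ~ dir_parallel (psub d a) l ->
  forall y, G y -> dot n c <= dot n y.
Proof.
  intros H6 Ht Hl Hle Hp Gb Gc Gd Hnb Hnd y Gy.
  pose proof Ht as [_ [_ [la _]]].
  pose proof (tangent_nonparallel_side G l a b n k Hl la Hle Gb Hnb) as Hal.
  pose proof (tangent_nonparallel_side G l a d n k Hl la Hle Gd Hnd) as Hbe.
  apply Rnot_lt_le; intro Hyc.
  destruct (frame_surj a b d y (proj2 Hp)) as [[sy ty] Ey].
  assert (Hbeyond : 1 < sy \/ 1 < ty).
  { rewrite <- (frame_11 a b c d (proj1 Hp)), Ey, !dot_frame in Hyc.
    apply NNPP; intro; nra. }
  destruct Hbeyond as [Hsy | Hty].
  - exact (no_curve_point_beyond_side G l a b c d n k y sy ty H6 Ht Hl Hle Hp Gb Gc Gd Gy Ey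
             Hal Hbe Hyc Hsy).
  - apply (no_curve_point_beyond_side G l a d c b n k y ty sy H6 Ht Hl Hle); auto.
    + apply parallelogram_swap, Hp.
    + rewrite frame_swap; exact Ey.
Qed.

Lemma supporting_line_oriented (G l : pt -> Prop) :
  supporting_line G l ->
  exists n k, n <> (0, 0) /\ (forall x, l x <-> dot n x = k) /\ forall x, G x -> dot n x <= k.
Proof.
  intros [n [k [Hn [Hl [_ [Hle | Hge]]]]]]; [exists n, k; auto |].
  exists (pscale (-1) n), (- k); repeat split.
  - intro E; apply Hn; revert E; pt_eq; intro E; injection E; intros; f_equal; lra.
  - intro Hx; apply Hl in Hx; revert Hx; pt_eq; lra.
  - intro Hx; apply Hl; revert Hx; pt_eq; lra.
  - intros x Gx; pose proof (Hge x Gx) as Hx; revert Hx; pt_eq; lra.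
Qed.

Lemma parallel_line_through (l : pt -> Prop) n k c :
  n <> (0, 0) -> (forall x, l x <-> dot n x = k) ->
  lines_parallel (fun x => dot n x = dot n c) l.
Proof.
  intros Hn Hl. split; [| split].
  - exists n, (dot n c); split; [assumption | reflexivity].
  - exists n, k; split; assumption.
  - exists (pscale ((k - dot n c) / dot n n) n); intro x. rewrite Hl.
    assert (Hnn : dot n n <> 0).
    { intro E; apply Hn; revert E; pt_eq; intro E; f_equal; nra. }
    replace (dot n (padd x _)) with (dot n x + (k - dot n c))
      by (revert Hnn; pt_eq; intro Hnn; field; exact Hnn).
    split; intro; lra.
Qed.

Theorem mainTheorem9 (G : pt -> Prop) (a b c d : pt) (l : pt -> Prop) :
  simple_closed_curve G ->
  (forall S : pt -> Prop, (forall x, S x -> G x) -> has_six_elements S ->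
     csc_position S) ->
  smooth_point G a ->
  tangent_line_at G a l ->
  G b -> G c -> G d ->
  nondeg_parallelogram a b c d ->
  ~ dir_parallel (psub b a) l ->
  ~ dir_parallel (psub d a) l ->
  exists L, L c /\ lines_parallel L l /\ supporting_line G L.
Proof.
  intros _ H6 _ Ht Gb Gc Gd Hp Hnb Hnd.
  destruct (supporting_line_oriented G l (proj1 (proj2 Ht))) as [n [k [Hn [Hl Hle]]]].
  exists (fun x => dot n x = dot n c); split; [reflexivity | split].
  - exact (parallel_line_through l n k c Hn Hl).
  - exists n, (dot n c); split; [assumption | split; [reflexivity | split]].
    + exists c; split; [assumption | reflexivity].
    + right; exact (opposite_vertex_extremal G l a b c d n k H6 Ht Hl Hle Hp Gb Gc Gd Hnb Hnd).
Qed.
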